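(* For all closed terms $P,Q\in\mathcal S_A$: $\mathrm{EqFSCL}\vdash P=Q$ if and only if $\mathbb M_{se}\models P=Q$, i.e. if and only if $se(P)=se(Q)$.
   Context: Let $A$ be a nonempty set of atoms. The signature $\Sigma_{SCL}(A)$ consists of the constants $\mathsf T,\mathsf F$, each atom $a\in A$ as a constant, unary negation $\neg$, and binary connectives $x\land^\circ y$ (left-sequential conjunction) and $x\lor^\circ y$ (left-sequential disjunction). $\mathcal S_A$ is the set of closed terms over $\Sigma_{SCL}(A)$. EqFSCL is the following set of equations in variables $x,y,z$: (F1) $\mathsf F=\neg\mathsf T$; (F2) $x\lor^\circ y=\neg(\neg x\land^\circ\neg y)$; (F3) $\neg\neg x=x$; (F4) $\mathsf T\land^\circ x=x$; (F5) $x\lor^\circ\mathsf F=x$; (F6) $\mathsf F\land^\circ x=\mathsf F$; (F7) $(x\land^\circ y)\land^\circ z=x\land^\circ(y\land^\circ z)$; (F8) $\neg x\land^\circ\mathsf F=x\land^\circ\mathsf F$; (F9) $(x\land^\circ\mathsf F)\lor^\circ y=(x\lor^\circ\mathsf T)\land^\circ y$; (F10) $(x\land^\circ y)\lor^\circ(z\land^\circ\mathsf F)=(x\lor^\circ(z\land^\circ\mathsf F))\land^\circ(y\lor^\circ(z\land^\circ\mathsf F))$. $E\vdash s=t$ means derivability in equational logic from $E$. Evaluation trees $\mathcal T_A$: $\mathsf T,\mathsf F\in\mathcal T_A$ and $(X\unlhd a\unrhd Y)\in\mathcal T_A$ for $X,Y\in\mathcal T_A$, $a\in A$ (root $a$,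 left branch $X$, right branch $Y$). Leaf replacement: $\mathsf T[\mathsf T\mapsto Y,\mathsf F\mapsto Z]=Y$, $\mathsf F[\mathsf T\mapsto Y,\mathsf F\mapsto Z]=Z$, $(X_1\unlhd a\unrhd X_2)[\mathsf T\mapsto Y,\mathsf F\mapsto Z]=X_1[\ldots]\unlhd a\unrhd X_2[\ldots]$; omitted replacements are identities. $se:\mathcal S_A\to\mathcal T_A$: $se(\mathsf T)=\mathsf T$, $se(\mathsf F)=\mathsf F$, $se(a)=\mathsf T\unlhd a\unrhd\mathsf F$, $se(\neg P)=se(P)[\mathsf T\mapsto\mathsf F,\mathsf F\mapsto\mathsf T]$, $se(P\land^\circ Q)=se(P)[\mathsf T\mapsto se(Q)]$, $se(P\lor^\circ Q)=se(P)[\mathsf F\mapsto se(Q)]$. $\mathbb M_{se}$ is the $\Sigma_{SCL}(A)$-algebra with domain $\{se(P)\mid P\in\mathcal S_A\}$ interpreting $\mathsf T,\mathsf F,a$ as $\mathsf T,\mathsf F,\mathsf T\unlhd a\unrhd\mathsf F$ and $\neg X=X[\mathsf T\mapsto\mathsf F,\mathsf F\mapsto\mathsf T]$, $X\land^\circ Y=X[\mathsf T\mapsto Y]$, $X\lor^\circ Y=X[\mathsf F\mapsto Y]$; so the interpretation of a closed term $P$ is $se(P)$. *)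

Set Implicit Arguments.

Section Defs.
Variable A : Type.

Inductive term : Type :=
| Var : nat -> term
| TT : term
| FF : term
| Atom : A -> term
| Neg : term -> term
| AndL : term -> term -> term
| OrL : term -> term -> term.

Inductive sterm : Type :=
| sT : sterm
| sF : sterm
| sAtom : A -> sterm
| sNeg : sterm -> sterm
| sAndL : sterm -> sterm -> sterm
| sOrL : sterm -> sterm -> sterm.

Fixpoint emb (P : sterm) : term :=
  match P with
  | sT => TT
  | sF => FF
  | sAtom a => Atom a
  | sNeg P => Neg (emb P)
  | sAndL P Q => AndL (emb P) (emb Q)
  | sOrL P Q => OrL (emb P) (emb Q)
  end.

Fixpoint subst (s : nat -> term) (t : term) : term :=
  match t with
  | Var n => s n
  | TT => TT
  | FF => FF
  | Atom a => Atom a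
  | Neg t => Neg (subst s t)
  | AndL t u => AndL (subst s t) (subst s u)
  | OrL t u => OrL (subst s t) (subst s u)
  end.

Inductive derivable (E : term -> term -> Prop) : term -> term -> Prop :=
| d_ax : forall l r (s : nat -> term), E l r -> derivable E (subst s l) (subst s r)
| d_refl : forall t, derivable E t t
| d_sym : forall t u, derivable E t u -> derivable E u t
| d_trans : forall t u v, derivable E t u -> derivable E u v -> derivable E t v
| d_neg : forall t u, derivable E t u -> derivable E (Neg t) (Neg u)
| d_and : forall t t' u u', derivable E t t' -> derivable E u u' ->
    derivable E (AndL t u) (AndL t' u')
| d_or : forall t t' u u', derivable E t t' -> derivable E u u' ->
    derivable E (OrL t u) (OrL t' u').

Definition x := Var 0.
Definition y := Var 1.
Definition z := Var 2.

Inductive EqFSCL : term -> term -> Prop :=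
| F1 : EqFSCL FF (Neg TT)
| F2 : EqFSCL (OrL x y) (Neg (AndL (Neg x) (Neg y)))
| F3 : EqFSCL (Neg (Neg x)) x
| F4 : EqFSCL (AndL TT x) x
| F5 : EqFSCL (OrL x FF) x
| F6 : EqFSCL (AndL FF x) FF
| F7 : EqFSCL (AndL (AndL x y) z) (AndL x (AndL y z))
| F8 : EqFSCL (AndL (Neg x) FF) (AndL x FF)
| F9 : EqFSCL (OrL (AndL x FF) y) (AndL (OrL x TT) y)
| F10 : EqFSCL (OrL (AndL x y) (AndL z FF))
               (AndL (OrL x (AndL z FF)) (OrL y (AndL z FF))).

(** Evaluation trees T_A. Node X a Y = X <| a |> Y. *)
Inductive tree : Type :=
| LT : tree
| LF : tree
| Node : tree -> A -> tree -> tree.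

Fixpoint repl (X Y Z : tree) : tree :=
  match X with
  | LT => Y
  | LF => Z
  | Node X1 a X2 => Node (repl X1 Y Z) a (repl X2 Y Z)
  end.

Fixpoint se (P : sterm) : tree :=
  match P with
  | sT => LT
  | sF => LF
  | sAtom a => Node LT a LF
  | sNeg P => repl (se P) LF LT
  | sAndL P Q => repl (se P) (se Q) LF
  | sOrL P Q => repl (se P) LT (se Q)
  end.

End Defs.

From Stdlib Require Import Lia Setoid Morphisms.

(* Soundness: interpreting open terms as evaluation trees validates every axiom,
   because leaf replacement is associative and [X[T ↦ T, F ↦ F] = X].

   Completeness: every closed term is provably equal to a normal form, which is
   either a T-form (its tree has only T-leaves), an F-form, or [t ⊓ m] with [t]
   a T-form and [m] built from literals [(±a ⊓ t) ⊔ f] by conjunctions whose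
   left argument is no conjunction and disjunctions whose left argument is no
   disjunction; and [se] is injective on normal forms.  Injectivity rests on unique factorisation for leaf replacement,
   an analogue of Levi's lemma for words: the tree [C[T ↦ M]] determines [C] and
   [M] when [C] is mixed and not itself such a composite ("T-prime") and [M] is
   mixed without a nontrivial F-free prefix.  Disjunctions reduce to
   conjunctions through the duality that swaps the leaves T and F. *)

Arguments LT {A}. Arguments LF {A}. Arguments Node {A}.
Arguments sT {A}. Arguments sF {A}. Arguments sNeg {A}. Arguments sAndL {A}. Arguments sOrL {A}.
Arguments TT {A}. Arguments FF {A}. Arguments Atom {A}. Arguments Neg {A}. Arguments AndL {A}.
Arguments OrL {A}. Arguments Var {A}.

(** * Evaluation trees *)
Section Trees.
Context {A : Type}.
Notation tree := (tree A).
Implicit Types X Y Z C D E M W : tree.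

Fixpoint hasT X : Prop :=
  match X with LT => True | LF => False | Node X1 _ X2 => hasT X1 \/ hasT X2 end.
Fixpoint hasF X : Prop :=
  match X with LT => False | LF => True | Node X1 _ X2 => hasF X1 \/ hasF X2 end.
Definition mixed X := hasT X /\ hasF X.
Fixpoint size X : nat :=
  match X with LT => 1 | LF => 1 | Node X1 _ X2 => S (size X1 + size X2) end.

Lemma repl_id X : repl X LT LF = X.
Proof. induction X; simpl; congruence. Qed.

Lemma repl_assoc X Y Z U V :
  repl (repl X Y Z) U V = repl X (repl Y U V) (repl Z U V).
Proof. induction X; simpl; congruence. Qed.

Lemma hasT_or_hasF X : hasT X \/ hasF X.
Proof. induction X; simpl; tauto. Qed.
Lemma hasT_dec X : hasT X \/ ~ hasT X.
Proof. induction X; simpl; tauto. Qed.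

Lemma hasT_repl X Y Z :
  hasT (repl X Y Z) <-> (hasT X /\ hasT Y) \/ (hasF X /\ hasT Z).
Proof. induction X; simpl; tauto. Qed.
Lemma hasF_repl X Y Z :
  hasF (repl X Y Z) <-> (hasT X /\ hasF Y) \/ (hasF X /\ hasF Z).
Proof. induction X; simpl; tauto. Qed.

Lemma replT_noT X Y : ~ hasT X -> repl X Y LF = X.
Proof. induction X; simpl; intros; [tauto | reflexivity | f_equal; tauto]. Qed.
Lemma replF_noF X Z : ~ hasF X -> repl X LT Z = X.
Proof. induction X; simpl; intros; [reflexivity | tauto | f_equal; tauto]. Qed.

Lemma mixed_replT C E : hasT C -> mixed E -> mixed (repl C E LF).
Proof. intros hC [eT eF]. split; [apply hasT_repl | apply hasF_repl]; auto. Qed.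
Lemma mixed_replF C E : hasF C -> mixed E -> mixed (repl C LT E).
Proof. intros hC [eT eF]. split; [apply hasT_repl | apply hasF_repl]; auto. Qed.

Lemma size_replT_le X Y Z : hasT X -> size Y <= size (repl X Y Z).
Proof.
  induction X; simpl; intros H; try tauto; try lia.
  destruct H as [H|H]; [apply IHX1 in H | apply IHX2 in H]; lia.
Qed.
Lemma size_replF_le X Y Z : hasF X -> size Z <= size (repl X Y Z).
Proof.
  induction X; simpl; intros H; try tauto; try lia.
  destruct H as [H|H]; [apply IHX1 in H | apply IHX2 in H]; lia.
Qed.

Lemma size_replT_grow E W : hasT (repl E W LF) -> E = LT \/ size W < size (repl E W LF).
Proof.
  destruct E as [| |E1 a E2]; simpl; intros H; auto; [tauto|].
  right. destruct H as [H|H]; apply hasT_repl in H; simpl in H;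
    destruct H as [[H _]|[_ []]]; apply (size_replT_le _ W LF) in H; lia.
Qed.
Lemma size_replF_grow E W : hasF (repl E LT W) -> E = LF \/ size W < size (repl E LT W).
Proof.
  destruct E as [| |E1 a E2]; simpl; intros H; auto; [tauto|].
  right. destruct H as [H|H]; apply hasF_repl in H; simpl in H;
    destruct H as [[_ []]|[H _]]; apply (size_replF_le _ LT W) in H; lia.
Qed.

Lemma replT_fixpoint X W : hasT W -> W = repl X W LF -> X = LT.
Proof.
  intros HW e. rewrite e in HW. destruct (size_replT_grow X W HW) as [|H]; auto.
  rewrite <- e in H. lia.
Qed.

Lemma replT_inj X X' W : hasT W -> repl X W LF = repl X' W LF -> X = X'.
Proof.
  intros HW. revert X'. induction X as [| |X1 IH1 a X2 IH2]; intros X' e.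
  - symmetry. apply (replT_fixpoint X' W HW e).
  - destruct X' as [| |X1' a' X2']; simpl in e; try discriminate; auto.
    subst. simpl in HW. tauto.
  - destruct X' as [| |X1' a' X2']; simpl in e; try discriminate.
    + apply (replT_fixpoint (Node X1 a X2) W HW). simpl. auto.
    + injection e; intros. f_equal; eauto.
Qed.

Lemma replT_cycle Y1 Y2 E1 E2 : hasT Y1 -> hasT Y2 ->
  Y1 = repl E1 Y2 LF -> Y2 = repl E2 Y1 LF -> E1 = LT /\ E2 = LT.
Proof.
  intros H1 H2 e1 e2.
  destruct (size_replT_grow E1 Y2) as [->|s1]; [rewrite <- e1; auto| |].
  - simpl in e1. subst. split; auto. apply (replT_fixpoint E2 Y2 H1 e2).
  - destruct (size_replT_grow E2 Y1) as [->|s2]; [rewrite <- e2; auto| |];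
      [simpl in e2|]; rewrite <- e1, <- e2 in *; lia.
Qed.

Lemma repl_mixed_cycle Y1 Y2 D C : mixed Y1 -> mixed Y2 ->
  Y2 = repl D LT Y1 -> Y1 = repl C Y2 LF -> D = LF /\ C = LT.
Proof.
  intros [H1 H1'] [H2 H2'] e1 e2.
  destruct (size_replF_grow D Y1) as [->|s1]; [rewrite <- e1; auto| |].
  - simpl in e1. subst. split; auto. apply (replT_fixpoint C Y1 H1 e2).
  - destruct (size_replT_grow C Y2) as [->|s2]; [rewrite <- e2; auto| |];
      [simpl in e2|]; rewrite <- e1, <- e2 in *; lia.
Qed.

Lemma levi_replT X1 X2 Y1 Y2 : hasT Y1 -> hasT Y2 -> repl X1 Y1 LF = repl X2 Y2 LF ->
  (~ hasT X1 /\ X1 = X2) \/ (exists E, Y1 = repl E Y2 LF /\ X2 = repl X1 E LF)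
  \/ (exists E, Y2 = repl E Y1 LF /\ X1 = repl X2 E LF).
Proof.
  intros H1 H2. revert X2. induction X1 as [| |X11 IH1 a X12 IH2]; intros X2 e.
  - right; left. exists X2. simpl in e. auto.
  - destruct X2 as [| |X21 b X22]; simpl in e; try discriminate.
    + subst. simpl in H2. tauto.
    + left. simpl. auto.
  - destruct X2 as [| |X21 b X22]; simpl in e; try discriminate.
    + right; right. exists (Node X11 a X12). simpl. auto.
    + injection e; intros e2 ea e1. subst b.
      destruct (IH1 _ e1) as [[n1 q1]|[[E [p1 q1]]|[E [p1 q1]]]];
      destruct (IH2 _ e2) as [[n2 q2]|[[E' [p2 q2]]|[E' [p2 q2]]]].
      * left. simpl. split; [tauto|congruence].
      * right; left. exists E'. split; auto. simpl. rewrite replT_noT by auto. congruence.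
      * right; right. exists E'. split; auto. simpl. subst X21. rewrite replT_noT by auto. congruence.
      * right; left. exists E. split; auto. simpl. rewrite (replT_noT X12) by auto. congruence.
      * right; left. exists E. split; auto.
        assert (E = E') by (apply (replT_inj _ _ Y2); congruence). subst. simpl. congruence.
      * destruct (replT_cycle Y1 Y2 E E' H1 H2 p1 p2) as [-> ->].
        right; left. exists LT. split; auto. simpl. rewrite q1, q2, !repl_id. auto.
      * right; right. exists E. split; auto. simpl. subst X22. rewrite (replT_noT X12) by auto. congruence.
      * destruct (replT_cycle Y1 Y2 E' E H1 H2 p2 p1) as [-> ->].
        right; left. exists LT. split; auto. simpl. rewrite q1, q2, !repl_id. auto.
      * right; right. exists E. split; auto.
        assert (E = E') by (apply (replT_inj _ _ Y1); congruence). subst. simpl. congruence.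
Qed.

Definition flip X := repl X LF LT.

Lemma flipK X : flip (flip X) = X.
Proof. unfold flip. rewrite repl_assoc. apply repl_id. Qed.
Lemma flip_inj X Y : flip X = flip Y -> X = Y.
Proof. intros e. rewrite <- (flipK X), <- (flipK Y). congruence. Qed.
Lemma flip_replT X Y : flip (repl X Y LF) = repl (flip X) LT (flip Y).
Proof. unfold flip. rewrite !repl_assoc. reflexivity. Qed.
Lemma flip_replF X Z : flip (repl X LT Z) = repl (flip X) (flip Z) LF.
Proof. unfold flip. rewrite !repl_assoc. reflexivity. Qed.
Lemma hasT_flip X : hasT (flip X) <-> hasF X.
Proof. unfold flip. induction X; simpl; tauto. Qed.
Lemma hasF_flip X : hasF (flip X) <-> hasT X.
Proof. unfold flip. induction X; simpl; tauto. Qed.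
Lemma mixed_flip X : mixed (flip X) <-> mixed X.
Proof. unfold mixed. rewrite hasT_flip, hasF_flip. tauto. Qed.

Lemma replF_inj X X' W : hasF W -> repl X LT W = repl X' LT W -> X = X'.
Proof.
  intros HW e. apply (f_equal flip) in e. rewrite !flip_replF in e.
  apply flip_inj, (replT_inj _ _ (flip W)); auto. apply hasT_flip; auto.
Qed.

Lemma levi_repl_mixed X1 X2 Y1 Y2 : mixed Y1 -> mixed Y2 -> repl X1 LT Y1 = repl X2 Y2 LF ->
  (~ hasF X2 /\ exists Y', Y2 = repl Y' LT Y1 /\ X1 = repl X2 Y' LF)
  \/ (~ hasT X1 /\ exists Y', Y1 = repl Y' Y2 LF /\ X2 = repl X1 LT Y').
Proof.
  intros H1 H2. revert X2. induction X1 as [| |X11 IH1 a X12 IH2]; intros X2 e.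
  - exfalso. destruct X2 as [| |X21 b X22]; simpl in e; try discriminate.
    subst. destruct H2 as [_ H2]. simpl in H2. tauto.
  - right. split; [simpl; tauto|]. exists X2. simpl in e. auto.
  - destruct X2 as [| |X21 b X22]; simpl in e; try discriminate.
    + left. split; [simpl; tauto|]. exists (Node X11 a X12). simpl. auto.
    + injection e; intros e2 ea e1. subst b.
      destruct (IH1 _ e1) as [[n1 [E [p1 q1]]]|[n1 [E [p1 q1]]]];
      destruct (IH2 _ e2) as [[n2 [E' [p2 q2]]]|[n2 [E' [p2 q2]]]].
      * left. split; [simpl; tauto|]. exists E. split; auto.
        assert (E = E') by (apply (replF_inj _ _ Y1); [apply H1|congruence]). subst. simpl. congruence.
      * destruct (repl_mixed_cycle Y1 Y2 E E' H1 H2 p1 p2) as [-> ->].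
        left. split.
        { simpl. intros [?|?]; [tauto|]. subst X22.
          apply hasF_repl in H. simpl in H. tauto. }
        exists LF. split; auto. simpl. rewrite q1. f_equal.
        subst X22. rewrite repl_assoc. simpl. symmetry. apply replT_noT. auto.
      * destruct (repl_mixed_cycle Y1 Y2 E' E H1 H2 p2 p1) as [-> ->].
        left. split.
        { simpl. intros [?|?]; [|tauto]. subst X21.
          apply hasF_repl in H. simpl in H. tauto. }
        exists LF. split; auto. simpl. rewrite q2. f_equal.
        subst X21. rewrite repl_assoc. simpl. symmetry. apply replT_noT. auto.
      * right. split; [simpl; tauto|]. exists E. split; auto.
        assert (E = E') by (apply (replT_inj _ _ Y2); [apply H2|congruence]). subst. simpl. congruence.
Qed.

End Trees.

(** * Unique factorisation of evaluation trees *)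

Section Factorisation.
Context {A : Type}.
Implicit Types X Y C D E M : tree A.

Definition Ttree X := hasT X /\ ~ hasF X.
Definition Ftree X := hasF X /\ ~ hasT X.

Definition T_prime X := forall C E, hasT C -> mixed E -> X = repl C E LF -> C = LT.
Definition F_prime X := forall C E, hasF C -> mixed E -> X = repl C LT E -> C = LF.
Definition T_prefix_free X := forall C E, ~ hasF C -> mixed E -> X = repl C E LF -> C = LT.
Definition F_prefix_free X := forall C E, ~ hasT C -> mixed E -> X = repl C LT E -> C = LF.
Definition M_tree X := mixed X /\ T_prefix_free X /\ F_prefix_free X.

Lemma T_prime_prefix_free X : T_prime X -> T_prefix_free X.
Proof. intros H C E nC mE e. apply (H C E); auto. destruct (hasT_or_hasF C); tauto. Qed.
Lemma F_prime_prefix_free X : F_prime X -> F_prefix_free X.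
Proof. intros H C E nC mE e. apply (H C E); auto. destruct (hasT_or_hasF C); tauto. Qed.

Lemma T_prime_flip X : F_prime X -> T_prime (flip X).
Proof.
  intros H C E hC mE e. apply flip_inj, (H (flip C) (flip E)).
  - apply hasF_flip; auto.
  - apply mixed_flip; auto.
  - rewrite <- flip_replT, <- e, flipK. reflexivity.
Qed.
Lemma F_prime_flip X : T_prime X -> F_prime (flip X).
Proof.
  intros H C E hC mE e. apply flip_inj, (H (flip C) (flip E)).
  - apply hasT_flip; auto.
  - apply mixed_flip; auto.
  - rewrite <- flip_replF, <- e, flipK. reflexivity.
Qed.
Lemma M_tree_flip X : M_tree X -> M_tree (flip X).
Proof.
  intros [mX [pT pF]]. split; [apply mixed_flip; auto | split].
  - intros C E nC mE e. apply flip_inj, (pF (flip C) (flip E)).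
    + rewrite hasT_flip. auto.
    + apply mixed_flip; auto.
    + rewrite <- flip_replT, <- e, flipK. reflexivity.
  - intros C E nC mE e. apply flip_inj, (pT (flip C) (flip E)).
    + rewrite hasF_flip. auto.
    + apply mixed_flip; auto.
    + rewrite <- flip_replF, <- e, flipK. reflexivity.
Qed.

Lemma T_prime_node X a Y : ~ mixed X -> ~ mixed Y -> T_prime (Node X a Y).
Proof.
  intros nX nY C E hC mE e. destruct C as [| |C1 b C2]; simpl in e; try discriminate; auto.
  injection e as e1 _ e2. exfalso. destruct hC as [h|h];
    [apply nX; rewrite e1 | apply nY; rewrite e2]; apply mixed_replT; auto.
Qed.
Lemma F_prime_node X a Y : ~ mixed X -> ~ mixed Y -> F_prime (Node X a Y).
Proof.
  intros nX nY C E hC mE e. destruct C as [| |C1 b C2]; simpl in e; try discriminate; auto.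
  injection e as e1 _ e2. exfalso. destruct hC as [h|h];
    [apply nX; rewrite e1 | apply nY; rewrite e2]; apply mixed_replF; auto.
Qed.

Lemma node_M_tree X a Y : ~ mixed X -> ~ mixed Y -> mixed (Node X a Y) ->
  M_tree (Node X a Y) /\ T_prime (Node X a Y) /\ F_prime (Node X a Y).
Proof.
  intros nX nY mN. assert (pT := T_prime_node X a Y nX nY). assert (pF := F_prime_node X a Y nX nY).
  repeat split; auto using T_prime_prefix_free, F_prime_prefix_free; apply mN.
Qed.

Lemma T_prime_not_conj X C M : T_prime X -> mixed C -> mixed M -> X <> repl C M LF.
Proof. intros p [cT cF] mM e. rewrite (p C M cT mM e) in cF. exact cF. Qed.
Lemma F_prime_not_disj X D M : F_prime X -> mixed D -> mixed M -> X <> repl D LT M.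
Proof. intros p [dT dF] mM e. rewrite (p D M dF mM e) in dT. exact dT. Qed.

Lemma conj_tree C M : M_tree C -> T_prime C -> M_tree M ->
  M_tree (repl C M LF) /\ F_prime (repl C M LF).
Proof.
  intros [[cT cF] [_ pFC]] pC [[mT mF] _].
  assert (pF : F_prime (repl C M LF)).
  { intros C' E hC' mE e. symmetry in e.
    destruct (levi_repl_mixed C' C E M mE (conj mT mF) e) as [[n _]|[n [Y [p q]]]]; [tauto|].
    apply (pFC C' Y); auto. split.
    - destruct (hasT_dec Y) as [|h]; auto. rewrite replT_noT in p by auto. subst. apply mE.
    - rewrite q in cF. apply hasF_repl in cF. simpl in cF. tauto. }
  split; [unfold M_tree; split; [apply mixed_replT; [exact cT | split; auto] | split] | exact pF].
  - intros E Y nE [yT yF] e.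
    destruct (levi_replT C E M Y mT yT e) as [[n _]|[[E' [p q]]|[E' [p q]]]].
    + tauto.
    + exfalso. apply nE. rewrite q. apply hasF_repl. simpl. auto.
    + apply (pC E E'); auto; [destruct (hasT_or_hasF E); tauto | split].
      * destruct (hasT_dec E') as [|h]; auto. rewrite replT_noT in p by auto. subst. tauto.
      * rewrite q in cF. apply hasF_repl in cF. simpl in cF. tauto.
  - apply F_prime_prefix_free. exact pF.
Qed.

Lemma disj_tree D M : M_tree D -> F_prime D -> M_tree M ->
  M_tree (repl D LT M) /\ T_prime (repl D LT M).
Proof.
  intros hD pD hM. rewrite <- (flipK (repl D LT M)), flip_replF.
  destruct (conj_tree (flip D) (flip M)) as [h p];
    auto using M_tree_flip, T_prime_flip, F_prime_flip.
Qed.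

Lemma replT_cancel C C' M M' : hasT C ->
  mixed M -> T_prefix_free M -> mixed M' -> T_prefix_free M' ->
  (forall E, mixed E -> C' <> repl C E LF) -> (forall E, mixed E -> C <> repl C' E LF) ->
  repl C M LF = repl C' M' LF -> C = C' /\ M = M'.
Proof.
  intros hC [mT mF] pM [mT' mF'] pM' n1 n2 e.
  destruct (levi_replT C C' M M' mT mT' e) as [[n _]|[[E [p q]]|[E [p q]]]]; [tauto| |].
  - assert (hE : ~ hasF E).
    { intro hE. apply (n1 E); auto. split; auto.
      destruct (hasT_dec E) as [|h]; auto. rewrite replT_noT in p by auto. subst. tauto. }
    assert (E = LT) by (apply (pM E M'); auto; split; auto).
    subst E. simpl in p. rewrite repl_id in q. auto.
  - assert (hE : ~ hasF E).
    { intro hE. apply (n2 E); auto. split; auto.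
      destruct (hasT_dec E) as [|h]; auto. rewrite replT_noT in p by auto. subst. tauto. }
    assert (E = LT) by (apply (pM' E M); auto; split; auto).
    subst E. simpl in p. rewrite repl_id in q. auto.
Qed.

Lemma conj_tree_inj C C' M M' : mixed C -> T_prime C -> mixed C' -> T_prime C' ->
  M_tree M -> M_tree M' -> repl C M LF = repl C' M' LF -> C = C' /\ M = M'.
Proof.
  intros mC pC mC' pC' [mM [pM _]] [mM' [pM' _]].
  apply replT_cancel; auto; [apply mC | |]; intros E mE; apply T_prime_not_conj; auto.
Qed.

Lemma disj_tree_inj D D' M M' : mixed D -> F_prime D -> mixed D' -> F_prime D' ->
  M_tree M -> M_tree M' -> repl D LT M = repl D' LT M' -> D = D' /\ M = M'.
Proof.
  intros mD pD mD' pD' hM hM' e. apply (f_equal flip) in e. rewrite !flip_replF in e.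
  destruct (conj_tree_inj (flip D) (flip D') (flip M) (flip M')) as [e1 e2];
    try apply mixed_flip; auto using M_tree_flip, T_prime_flip.
  split; apply flip_inj; auto.
Qed.

Lemma Ttree_conj_inj X X' M M' : Ttree X -> Ttree X' ->
  M_tree M -> M_tree M' -> repl X M LF = repl X' M' LF -> X = X' /\ M = M'.
Proof.
  intros [hX nX] [hX' nX'] [mM [pM _]] [mM' [pM' _]].
  apply replT_cancel; auto; intros E [_ hE] e; [apply nX' | apply nX];
    rewrite e; apply hasF_repl; auto.
Qed.

End Factorisation.

(** * Soundness *)

Section Soundness.
Context {A : Type}.

Fixpoint eval (r : nat -> tree A) (t : term A) : tree A :=
  match t with
  | Var n => r n
  | TT => LT
  | FF => LF
  | Atom a => Node LT a LF
  | Neg t => repl (eval r t) LF LT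
  | AndL t u => repl (eval r t) (eval r u) LF
  | OrL t u => repl (eval r t) LT (eval r u)
  end.

Lemma eval_subst r s t : eval r (subst s t) = eval (fun n => eval r (s n)) t.
Proof. induction t; simpl; congruence. Qed.

Lemma eval_emb r P : eval r (emb P) = se P.
Proof. induction P; simpl; congruence. Qed.

Lemma EqFSCL_valid l u r : EqFSCL l u -> eval r l = eval r u.
Proof. destruct 1; simpl; rewrite ?repl_assoc; simpl; rewrite ?repl_id; reflexivity. Qed.

Lemma derivable_valid t u rho : derivable (@EqFSCL A) t u -> eval rho t = eval rho u.
Proof.
  intros H. revert rho. induction H; intros rho; simpl; try congruence.
  rewrite !eval_subst. apply EqFSCL_valid. assumption.
Qed.

Lemma se_sound P Q : derivable (@EqFSCL A) (emb P) (emb Q) -> se P = se Q.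
Proof.
  intros H. rewrite <- (eval_emb (fun _ => LT) P), <- (eval_emb (fun _ => LT) Q).
  apply derivable_valid. exact H.
Qed.

End Soundness.

(** * Derivable equality of closed terms *)

Definition eqv {A} (P Q : sterm A) := derivable (@EqFSCL A) (emb P) (emb Q).
Infix "≈" := eqv (at level 70).
Notation "P ⊓ Q" := (sAndL P Q) (at level 40, left associativity).
Notation "P ⊔ Q" := (sOrL P Q) (at level 50, left associativity).
Notation "! P" := (sNeg P) (at level 35, right associativity).

Instance eqv_Equivalence {A} : Equivalence (@eqv A).
Proof. split; intro; intros; [apply d_refl | apply d_sym; auto | eapply d_trans; eauto]. Qed.
Instance sNeg_Proper {A} : Proper (eqv ==> eqv) (@sNeg A).
Proof. intros ? ? H. apply d_neg. exact H. Qed.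
Instance sAndL_Proper {A} : Proper (eqv ==> eqv ==> eqv) (@sAndL A).
Proof. intros ? ? H ? ? H'. apply d_and; assumption. Qed.
Instance sOrL_Proper {A} : Proper (eqv ==> eqv ==> eqv) (@sOrL A).
Proof. intros ? ? H ? ? H'. apply d_or; assumption. Qed.

Definition xyz_subst {A} (P Q R : sterm A) (n : nat) : term A :=
  match n with 0 => emb P | 1 => emb Q | _ => emb R end.

Section Calculus.
Context {A : Type}.
Implicit Types P Q R t s u f g h : sterm A.

Lemma F_negT : sF ≈ (!sT : sterm A). Proof. exact (d_ax _ _ _ (xyz_subst sT sT sT) (F1 A)). Qed.
Lemma or_def P Q : P ⊔ Q ≈ !(!P ⊓ !Q). Proof. exact (d_ax _ _ _ (xyz_subst P Q sT) (F2 A)). Qed.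
Lemma negK P : !!P ≈ P. Proof. exact (d_ax _ _ _ (xyz_subst P sT sT) (F3 A)). Qed.
Lemma andTl P : sT ⊓ P ≈ P. Proof. exact (d_ax _ _ _ (xyz_subst P sT sT) (F4 A)). Qed.
Lemma orFr P : P ⊔ sF ≈ P. Proof. exact (d_ax _ _ _ (xyz_subst P sT sT) (F5 A)). Qed.
Lemma andFl P : sF ⊓ P ≈ sF. Proof. exact (d_ax _ _ _ (xyz_subst P sT sT) (F6 A)). Qed.
Lemma andA P Q R : P ⊓ Q ⊓ R ≈ P ⊓ (Q ⊓ R). Proof. exact (d_ax _ _ _ (xyz_subst P Q R) (F7 A)). Qed.
Lemma neg_andF P : !P ⊓ sF ≈ P ⊓ sF. Proof. exact (d_ax _ _ _ (xyz_subst P sT sT) (F8 A)). Qed.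
Lemma andF_or P Q : P ⊓ sF ⊔ Q ≈ (P ⊔ sT) ⊓ Q. Proof. exact (d_ax _ _ _ (xyz_subst P Q sT) (F9 A)). Qed.
Lemma or_andF_distr P Q R : P ⊓ Q ⊔ R ⊓ sF ≈ (P ⊔ R ⊓ sF) ⊓ (Q ⊔ R ⊓ sF).
Proof. exact (d_ax _ _ _ (xyz_subst P Q R) (F10 A)). Qed.

End Calculus.

(* [Tt t]: every leaf of [se t] is T; [Ff f]: every leaf of [se f] is F. *)
Notation Tt t := (t ≈ t ⊔ sT).
Notation Ff f := (f ≈ f ⊓ sF).

Section DerivedLaws.
Context {A : Type}.
Implicit Types P Q R t s u f g h : sterm A.

Lemma negT : !sT ≈ (sF : sterm A). Proof. symmetry. apply F_negT. Qed.
Lemma negF : !sF ≈ (sT : sterm A). Proof. rewrite F_negT. apply negK. Qed.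
Lemma neg_and P Q : !(P ⊓ Q) ≈ !P ⊔ !Q. Proof. rewrite (or_def (!P) (!Q)), !negK. reflexivity. Qed.
Lemma neg_or P Q : !(P ⊔ Q) ≈ !P ⊓ !Q. Proof. rewrite or_def, negK. reflexivity. Qed.
Lemma orA P Q R : P ⊔ Q ⊔ R ≈ P ⊔ (Q ⊔ R).
Proof. rewrite (or_def (P ⊔ Q) R), (or_def P (Q ⊔ R)), !neg_or, andA. reflexivity. Qed.
Lemma orFl P : sF ⊔ P ≈ P. Proof. rewrite or_def, negF, andTl, negK. reflexivity. Qed.
Lemma orTl P : sT ⊔ P ≈ sT. Proof. rewrite or_def, negT, andFl, negF. reflexivity. Qed.
Lemma andTr P : P ⊓ sT ≈ P.
Proof. rewrite <- (negK (P ⊓ sT)), neg_and, negT, orFr, negK. reflexivity. Qed.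
Lemma neg_orT P : !P ⊔ sT ≈ P ⊔ sT. Proof. rewrite !or_def, negK, negT, neg_andF. reflexivity. Qed.
Lemma andF_absorb P R : R ⊓ sF ⊓ P ≈ R ⊓ sF. Proof. rewrite andA, andFl. reflexivity. Qed.
Lemma orT_absorb P R : R ⊔ sT ⊔ P ≈ R ⊔ sT. Proof. rewrite orA, orTl. reflexivity. Qed.

Lemma and_orT_distr P Q R : (P ⊔ Q) ⊓ (R ⊔ sT) ≈ P ⊓ (R ⊔ sT) ⊔ Q ⊓ (R ⊔ sT).
Proof.
  assert (H := or_andF_distr (!P) (!Q) (!R)). apply sNeg_Proper in H.
  rewrite (neg_or (!P ⊓ !Q) (!R ⊓ sF)), (neg_and (!P) (!Q)), (neg_and (!R) sF),
    !negK, negF in H.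
  rewrite (neg_and (!P ⊔ (!R ⊓ sF)) (!Q ⊔ (!R ⊓ sF))), (neg_or (!P) (!R ⊓ sF)),
    (neg_or (!Q) (!R ⊓ sF)), (neg_and (!R) sF), !negK, negF in H.
  exact H.
Qed.

Lemma Tt_absorb t P : Tt t -> t ⊔ P ≈ t.
Proof. intros H. rewrite H at 1. rewrite orT_absorb. symmetry. exact H. Qed.
Lemma Ff_absorb f P : Ff f -> f ⊓ P ≈ f.
Proof. intros H. rewrite H at 1. rewrite andF_absorb. symmetry. exact H. Qed.
Lemma Tt_T : Tt (sT : sterm A). Proof. symmetry. apply orTl. Qed.
Lemma Ff_F : Ff (sF : sterm A). Proof. symmetry. apply andFl. Qed.
Lemma Tt_orT P : Tt (P ⊔ sT). Proof. symmetry. apply orT_absorb. Qed.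
Lemma Ff_neg t : Tt t -> Ff (!t).
Proof. intros H. rewrite H at 1. rewrite neg_or, negT. reflexivity. Qed.
Lemma Ff_andr P g : Ff g -> Ff (P ⊓ g).
Proof. intros H. rewrite andA, <- H. reflexivity. Qed.
Lemma Tt_and t s : Tt t -> Tt s -> Tt (t ⊓ s).
Proof.
  intros Ht Hs. assert (E : t ⊓ s ≈ t ⊓ sF ⊔ s ⊔ sT).
  { rewrite orA, <- Hs, andF_or, <- Ht. reflexivity. }
  rewrite E. apply Tt_orT.
Qed.
Lemma Ff_orT_andF g : Ff g -> g ≈ (g ⊔ sT) ⊓ sF.
Proof. intros H. rewrite <- andF_or, orFr. exact H. Qed.
Lemma Tt_neg u : Tt u -> !u ≈ u ⊓ sF.
Proof. intros H. transitivity (!u ⊓ sF); [apply Ff_neg; auto | apply neg_andF]. Qed.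

Lemma andTt_orFf_comm P t f : Tt t -> Ff f -> P ⊓ t ⊔ f ≈ (P ⊔ f) ⊓ t.
Proof.
  intros Ht Hf. assert (E := or_andF_distr P t f). rewrite <- Hf in E. rewrite E.
  rewrite (Tt_absorb t f Ht). reflexivity.
Qed.
Lemma andTt_distr P Q t : Tt t -> (P ⊔ Q) ⊓ t ≈ P ⊓ t ⊔ Q ⊓ t.
Proof. intros Ht. assert (E := and_orT_distr P Q t). rewrite <- Ht in E. exact E. Qed.
Lemma orFf_distr P Q h : Ff h -> P ⊓ Q ⊔ h ≈ (P ⊔ h) ⊓ (Q ⊔ h).
Proof. intros Hh. assert (E := or_andF_distr P Q h). rewrite <- Hh in E. exact E. Qed.

(* Each of the next three identities is obtained the same way: write [g] as
   [(g ⊔ T) ⊓ F], distribute the always-true [g ⊔ T], and move the trailing [F]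
   inwards with [neg_andF]. *)
Lemma orFf_andFf_neg P g h : Ff g -> Ff h -> (P ⊔ h) ⊓ g ≈ (!P ⊔ g) ⊓ h.
Proof.
  intros Hg Hh.
  rewrite (Ff_orT_andF g Hg) at 1.
  rewrite <- (andA (P ⊔ h) (g ⊔ sT) sF), (and_orT_distr P h g), (Ff_absorb h (g ⊔ sT) Hh).
  rewrite <- (neg_andF (P ⊓ (g ⊔ sT) ⊔ h)), (neg_or (P ⊓ (g ⊔ sT)) h).
  rewrite (andA (!(P ⊓ (g ⊔ sT))) (!h) sF), (neg_andF h), <- Hh.
  rewrite (neg_and P (g ⊔ sT)), (neg_or g sT), negT, (neg_andF g), <- Hg.
  reflexivity.
Qed.

Lemma or_andFf P Q g : Ff g -> (P ⊔ Q) ⊓ g ≈ (!P ⊔ g) ⊓ (Q ⊓ g).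
Proof.
  intros Hg.
  rewrite (Ff_orT_andF g Hg) at 1.
  rewrite <- (andA (P ⊔ Q) (g ⊔ sT) sF), (and_orT_distr P Q g).
  rewrite <- (neg_andF (P ⊓ (g ⊔ sT) ⊔ Q ⊓ (g ⊔ sT))), (neg_or (P ⊓ (g ⊔ sT)) (Q ⊓ (g ⊔ sT))).
  rewrite (andA (!(P ⊓ (g ⊔ sT))) (!(Q ⊓ (g ⊔ sT))) sF), (neg_andF (Q ⊓ (g ⊔ sT))).
  rewrite (andA Q (g ⊔ sT) sF), <- (Ff_orT_andF g Hg).
  rewrite (neg_and P (g ⊔ sT)), (neg_or g sT), negT, (neg_andF g), <- Hg.
  reflexivity.
Qed.

Lemma or_andTt_andFf P t1 t2 g : Tt t1 -> Tt t2 -> Ff g ->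
  (P ⊓ t1 ⊔ t2) ⊓ g ≈ (P ⊔ t2 ⊓ g) ⊓ (t1 ⊓ g).
Proof.
  intros H1 H2 Hg.
  rewrite (Ff_orT_andF g Hg) at 1.
  rewrite <- (andA (P ⊓ t1 ⊔ t2) (g ⊔ sT) sF), (and_orT_distr (P ⊓ t1) t2 g),
    (andA P t1 (g ⊔ sT)).
  rewrite <- (neg_andF (P ⊓ (t1 ⊓ (g ⊔ sT)) ⊔ t2 ⊓ (g ⊔ sT))),
    (neg_or (P ⊓ (t1 ⊓ (g ⊔ sT))) (t2 ⊓ (g ⊔ sT))).
  rewrite (andA (!(P ⊓ (t1 ⊓ (g ⊔ sT)))) (!(t2 ⊓ (g ⊔ sT))) sF), (neg_andF (t2 ⊓ (g ⊔ sT))).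
  rewrite (neg_and P (t1 ⊓ (g ⊔ sT))).
  rewrite (Tt_neg (t1 ⊓ (g ⊔ sT))) by (apply Tt_and; [auto | apply Tt_orT]).
  rewrite (andA t1 (g ⊔ sT) sF), (andA t2 (g ⊔ sT) sF), <- (Ff_orT_andF g Hg).
  symmetry. apply orFf_andFf_neg; apply Ff_andr; auto.
Qed.

Lemma andTt_orTt_neg P s t : Tt s -> Tt t -> !P ⊓ s ⊔ t ≈ P ⊓ t ⊔ s.
Proof.
  intros Hs Ht.
  transitivity (!((P ⊔ !s) ⊓ !t)).
  { rewrite (neg_and (P ⊔ !s) (!t)), (neg_or P (!s)), !negK. reflexivity. }
  rewrite (orFf_andFf_neg P (!t) (!s)) by (apply Ff_neg; auto).
  rewrite (neg_and (!P ⊔ !t) (!s)), (neg_or (!P) (!t)), !negK. reflexivity.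
Qed.

Lemma or_andFf_absorb P Q g : Ff g -> (P ⊔ Q) ⊓ g ≈ (P ⊔ Q ⊓ g) ⊓ g.
Proof.
  intros Hg. rewrite (or_andFf P Q g Hg), (or_andFf P (Q ⊓ g) g Hg), (andA Q g g),
    (Ff_absorb g g Hg).
  reflexivity.
Qed.

End DerivedLaws.

(** * Normal forms *)

Section NormalForms.
Context {A : Type}.
Implicit Types P Q t s u f g h c d m : sterm A.

(* The node of [a ⊓ t1 ⊔ t2] and of [(a ⊔ f2) ⊓ f1] has [t1], resp. [f1], as left branch. *)
Inductive Tform : sterm A -> Prop :=
| Tform_T : Tform sT
| Tform_node a t1 t2 : Tform t1 -> Tform t2 -> Tform (sAtom a ⊓ t1 ⊔ t2).
Inductive Fform : sterm A -> Prop :=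
| Fform_F : Fform sF
| Fform_node a f1 f2 : Fform f1 -> Fform f2 -> Fform ((sAtom a ⊔ f2) ⊓ f1).
Inductive Lform : sterm A -> Prop :=
| Lform_atom a t f : Tform t -> Fform f -> Lform (sAtom a ⊓ t ⊔ f)
| Lform_negatom a t f : Tform t -> Fform f -> Lform (!sAtom a ⊓ t ⊔ f).

Inductive kind := Lit | Conj | Disj.
Definition kind_dual k := match k with Lit => Lit | Conj => Disj | Disj => Conj end.

Inductive Mform : kind -> sterm A -> Prop :=
| Mform_lit m : Lform m -> Mform Lit m
| Mform_conj k k' c m : Mform k c -> k <> Conj -> Mform k' m -> Mform Conj (c ⊓ m)
| Mform_disj k k' d m : Mform k d -> k <> Disj -> Mform k' m -> Mform Disj (d ⊔ m).

Inductive Nform : sterm A -> Prop :=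
| Nform_T t : Tform t -> Nform t
| Nform_F f : Fform f -> Nform f
| Nform_M t k m : Tform t -> Mform k m -> Nform (t ⊓ m).

Lemma Tform_Tt t : Tform t -> Tt t.
Proof. induction 1. apply Tt_T. rewrite orA, <- IHTform2. reflexivity. Qed.
Lemma Fform_Ff f : Fform f -> Ff f.
Proof. induction 1. apply Ff_F. rewrite andA, <- IHFform1. reflexivity. Qed.

Lemma Tform_neg t : Tform t -> exists f, Fform f /\ !t ≈ f.
Proof.
  induction 1 as [|a t1 t2 H1 [f1 [F1 E1]] H2 [f2 [F2 E2]]].
  - exists sF. split; [constructor | apply negT].
  - exists ((sAtom a ⊔ f2) ⊓ f1). split; [constructor; auto |].
    rewrite neg_or, neg_and, E1, E2. symmetry. apply orFf_andFf_neg; apply Fform_Ff; auto.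
Qed.
Lemma Fform_neg f : Fform f -> exists t, Tform t /\ !f ≈ t.
Proof.
  induction 1 as [|a f1 f2 H1 [t1 [T1 E1]] H2 [t2 [T2 E2]]].
  - exists sT. split; [constructor | apply negF].
  - exists (sAtom a ⊓ t1 ⊔ t2). split; [constructor; auto |].
    rewrite neg_and, neg_or, E1, E2. apply andTt_orTt_neg; apply Tform_Tt; auto.
Qed.
Lemma Tform_and_Tform t s : Tform t -> Tform s -> exists u, Tform u /\ t ⊓ s ≈ u.
Proof.
  intros Ht Hs. induction Ht as [|a t1 t2 H1 [u1 [U1 E1]] H2 [u2 [U2 E2]]].
  - exists s. split; auto. apply andTl.
  - exists (sAtom a ⊓ u1 ⊔ u2). split; [constructor; auto |].
    rewrite andTt_distr by (apply Tform_Tt; auto). rewrite andA, E1, E2. reflexivity.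
Qed.
Lemma Tform_and_Fform t g : Tform t -> Fform g -> exists u, Fform u /\ t ⊓ g ≈ u.
Proof.
  intros Ht Hg. induction Ht as [|a t1 t2 H1 [u1 [U1 E1]] H2 [u2 [U2 E2]]].
  - exists g. split; auto. apply andTl.
  - exists ((sAtom a ⊔ u2) ⊓ u1). split; [constructor; auto |].
    rewrite or_andTt_andFf by (apply Tform_Tt || apply Fform_Ff; auto). rewrite E1, E2. reflexivity.
Qed.
Lemma Fform_or_Fform f h : Fform f -> Fform h -> exists u, Fform u /\ f ⊔ h ≈ u.
Proof.
  intros Hf Hh. induction Hf as [|a f1 f2 H1 [u1 [U1 E1]] H2 [u2 [U2 E2]]].
  - exists h. split; auto. apply orFl.
  - exists ((sAtom a ⊔ u2) ⊓ u1). split; [constructor; auto |].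
    rewrite orFf_distr by (apply Fform_Ff; auto). rewrite orA, E1, E2. reflexivity.
Qed.

Lemma Lform_neg m : Lform m -> exists m', Lform m' /\ !m ≈ m'.
Proof.
  intros [a t f Ht Hf|a t f Ht Hf];
    destruct (Tform_neg t Ht) as [f' [F' E1]]; destruct (Fform_neg f Hf) as [t' [T' E2]].
  - exists (!sAtom a ⊓ t' ⊔ f'). split; [constructor; auto |].
    rewrite neg_or, neg_and, E1, E2. symmetry.
    apply andTt_orFf_comm; [apply Tform_Tt | apply Fform_Ff]; auto.
  - exists (sAtom a ⊓ t' ⊔ f'). split; [constructor; auto |].
    rewrite neg_or, neg_and, negK, E1, E2. symmetry.
    apply andTt_orFf_comm; [apply Tform_Tt | apply Fform_Ff]; auto.
Qed.

Lemma Mform_neg k m : Mform k m -> exists m', Mform (kind_dual k) m' /\ !m ≈ m'.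
Proof.
  induction 1 as [m Hm|k k' c m Hc [c' [C' Ec]] Hk Hm [m' [M' Em]]
                 |k k' d m Hd [d' [D' Ed]] Hk Hm [m' [M' Em]]].
  - destruct (Lform_neg m Hm) as [m' [L' E]]. exists m'. split; auto. constructor; auto.
  - exists (c' ⊔ m'). split.
    + apply Mform_disj with (kind_dual k) (kind_dual k'); auto. destruct k; simpl; congruence.
    + rewrite neg_and, Ec, Em. reflexivity.
  - exists (d' ⊓ m'). split.
    + apply Mform_conj with (kind_dual k) (kind_dual k'); auto. destruct k; simpl; congruence.
    + rewrite neg_or, Ed, Em. reflexivity.
Qed.

Lemma Mform_and_Tform k m s : Mform k m -> Tform s -> exists m', Mform k m' /\ m ⊓ s ≈ m'.
Proof.
  intros Hm Hs. assert (Ts := Tform_Tt s Hs).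
  induction Hm as [m Hm|k k' c m Hc _ Hk Hm [m' [M' Em]]|k k' d m Hd [d' [D' Ed]] Hk Hm [m' [M' Em]]].
  - destruct Hm as [a t f Ht Hf|a t f Ht Hf]; destruct (Tform_and_Tform t s Ht Hs) as [u [U Eu]].
    + exists (sAtom a ⊓ u ⊔ f). split; [do 2 constructor; auto |].
      rewrite andTt_distr by auto. rewrite andA, Eu, (Ff_absorb f s) by (apply Fform_Ff; auto).
      reflexivity.
    + exists (!sAtom a ⊓ u ⊔ f). split; [do 2 constructor; auto |].
      rewrite andTt_distr by auto. rewrite andA, Eu, (Ff_absorb f s) by (apply Fform_Ff; auto).
      reflexivity.
  - exists (c ⊓ m'). split; [econstructor; eauto |]. rewrite andA, Em. reflexivity.
  - exists (d' ⊔ m'). split; [econstructor; eauto |].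
    rewrite andTt_distr by auto. rewrite Ed, Em. reflexivity.
Qed.

Lemma Mform_and_Mform k m k2 m2 : Mform k m -> Mform k2 m2 ->
  exists k' m', Mform k' m' /\ m ⊓ m2 ≈ m'.
Proof.
  intros Hm Hm2.
  induction Hm as [m Hm|k k' c m Hc _ Hk Hm [k'' [m' [M' Em]]]|k k' d m Hd _ Hk Hm _].
  - exists Conj, (m ⊓ m2). split; [|reflexivity].
    apply Mform_conj with Lit k2; [constructor; auto | discriminate | auto].
  - exists Conj, (c ⊓ m'). split.
    + apply Mform_conj with k k''; auto.
    + rewrite andA, Em. reflexivity.
  - exists Conj, ((d ⊔ m) ⊓ m2). split; [|reflexivity].
    apply Mform_conj with Disj k2; [econstructor; eauto | discriminate | auto].
Qed.

Lemma Mform_or_Fform_and_Fform k m g h : Mform k m -> Fform g -> Fform h ->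
  exists u, Fform u /\ (m ⊔ h) ⊓ g ≈ u.
Proof.
  intros Hm. revert g h.
  induction Hm as [m Hm|k k' c m Hc IHc Hk Hm IHm|k k' d m Hd IHd Hk Hm IHm]; intros g h Hg Hh.
  - destruct Hm as [a t f Ht Hf|a t f Ht Hf]; destruct (Tform_and_Fform t g Ht Hg) as [u [U Eu]];
      destruct (Fform_or_Fform _ _ Hf Hh) as [k' [K' Ek]].
    + exists ((sAtom a ⊔ k') ⊓ u). split; [constructor; auto |].
      rewrite orA, Ek, andTt_orFf_comm by (apply Tform_Tt || apply Fform_Ff; auto).
      rewrite andA, Eu. reflexivity.
    + exists ((sAtom a ⊔ u) ⊓ k'). split; [constructor; auto |].
      rewrite orA, Ek, andTt_orFf_comm by (apply Tform_Tt || apply Fform_Ff; auto).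
      rewrite andA, Eu. symmetry. apply orFf_andFf_neg; apply Fform_Ff; auto.
  - destruct (IHm g h Hg Hh) as [k1 [K1 E1]].
    destruct (IHc k1 h K1 Hh) as [u [U Eu]].
    exists u. split; auto. rewrite orFf_distr by (apply Fform_Ff; auto). rewrite andA, E1. exact Eu.
  - destruct (IHm g h Hg Hh) as [k1 [K1 E1]].
    destruct (IHd g k1 Hg K1) as [u [U Eu]].
    exists u. split; auto. rewrite orA, or_andFf_absorb by (apply Fform_Ff; auto).
    rewrite E1. exact Eu.
Qed.

Lemma Mform_and_Fform k m g : Mform k m -> Fform g -> exists u, Fform u /\ m ⊓ g ≈ u.
Proof.
  intros Hm Hg. destruct (Mform_or_Fform_and_Fform k m g sF Hm Hg Fform_F) as [u [U E]].
  exists u. split; auto. rewrite <- E, orFr. reflexivity.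
Qed.

Lemma Nform_neg n : Nform n -> exists n', Nform n' /\ !n ≈ n'.
Proof.
  intros [t Ht|f Hf|t k m Ht Hm].
  - destruct (Tform_neg t Ht) as [f [F E]]. exists f. split; [constructor 2|]; auto.
  - destruct (Fform_neg f Hf) as [t [T E]]. exists t. split; [constructor 1|]; auto.
  - destruct (Tform_neg t Ht) as [f [F Ef]]. destruct (Fform_neg f F) as [t' [T' Et']].
    destruct (Mform_neg k m Hm) as [m' [M' Em]].
    exists (t' ⊓ m'). split; [apply Nform_M with (kind_dual k); auto |].
    (* [f ⊔ m' ≈ (f ⊔ T) ⊓ m'] as [f] is always false, and [f ⊔ T ≈ !f ⊔ T ≈ t'] *)
    rewrite neg_and, Ef, Em. rewrite (Fform_Ff f F) at 1.
    rewrite andF_or, <- neg_orT, Et', <- (Tform_Tt t' T'). reflexivity.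
Qed.

Lemma Nform_and n1 n2 : Nform n1 -> Nform n2 -> exists n, Nform n /\ n1 ⊓ n2 ≈ n.
Proof.
  intros [t1 T1|f1 F1|t k m Ht Hm] H2.
  - destruct H2 as [t2 T2|f2 F2|s k2 m2 Hs Hm2].
    + destruct (Tform_and_Tform t1 t2 T1 T2) as [u [U E]]. exists u. split; [constructor 1|]; auto.
    + destruct (Tform_and_Fform t1 f2 T1 F2) as [u [U E]]. exists u. split; [constructor 2|]; auto.
    + destruct (Tform_and_Tform t1 s T1 Hs) as [u [U E]]. exists (u ⊓ m2).
      split; [apply Nform_M with k2; auto |]. rewrite <- andA, E. reflexivity.
  - exists f1. split; [constructor 2; auto |]. apply Ff_absorb, Fform_Ff; auto.
  - destruct H2 as [t2 T2|f2 F2|s k2 m2 Hs Hm2].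
    + destruct (Mform_and_Tform k m t2 Hm T2) as [m' [M' E]]. exists (t ⊓ m').
      split; [apply Nform_M with k; auto |]. rewrite andA, E. reflexivity.
    + destruct (Mform_and_Fform k m f2 Hm F2) as [u [U E]].
      destruct (Tform_and_Fform t u Ht U) as [v [V Ev]].
      exists v. split; [constructor 2; auto |]. rewrite andA, E. exact Ev.
    + destruct (Mform_and_Tform k m s Hm Hs) as [m' [M' E]].
      destruct (Mform_and_Mform k m' k2 m2 M' Hm2) as [k'' [m'' [M'' E']]].
      exists (t ⊓ m''). split; [apply Nform_M with k''; auto |].
      rewrite andA, <- (andA m s m2), E, E'. reflexivity.
Qed.

Lemma Nform_exists P : exists n, Nform n /\ P ≈ n.
Proof.
  induction P as [| |a|P [n [N E]]|P [n1 [N1 E1]] Q [n2 [N2 E2]]|P [n1 [N1 E1]] Q [n2 [N2 E2]]].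
  - exists sT. split; [constructor; constructor | reflexivity].
  - exists sF. split; [constructor 2; constructor | reflexivity].
  - exists (sT ⊓ (sAtom a ⊓ sT ⊔ sF)). split.
    + apply Nform_M with Lit; [constructor | do 2 constructor; constructor].
    + rewrite andTl, orFr, andTr. reflexivity.
  - destruct (Nform_neg n N) as [n' [N' E']]. exists n'. split; auto. rewrite E. exact E'.
  - destruct (Nform_and n1 n2 N1 N2) as [n [N E]]. exists n. split; auto. rewrite E1, E2. exact E.
  - destruct (Nform_neg n1 N1) as [m1 [M1 F1]]. destruct (Nform_neg n2 N2) as [m2 [M2 F2]].
    destruct (Nform_and m1 m2 M1 M2) as [m [M Em]]. destruct (Nform_neg m M) as [n [N En]].
    exists n. split; auto. rewrite or_def, E1, E2, F1, F2, Em. exact En.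
Qed.

End NormalForms.

(** * Injectivity of [se] on normal forms *)

Section Injectivity.
Context {A : Type}.
Implicit Types t f m c d : sterm A.

Lemma se_Tnode a t1 t2 : ~ hasF (se t1) -> se (sAtom a ⊓ t1 ⊔ t2) = Node (se t1) a (se t2).
Proof. intros H. simpl. rewrite replF_noF by auto. reflexivity. Qed.
Lemma se_Fnode a f1 f2 : ~ hasT (se f2) -> se ((sAtom a ⊔ f2) ⊓ f1) = Node (se f1) a (se f2).
Proof. intros H. simpl. rewrite replT_noT by auto. reflexivity. Qed.
Lemma se_negatom_node a t f : ~ hasF (se t) -> se (!sAtom a ⊓ t ⊔ f) = Node (se f) a (se t).
Proof. intros H. simpl. rewrite replF_noF by auto. reflexivity. Qed.

Lemma se_Tform t : Tform t -> Ttree (se t).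
Proof.
  induction 1 as [|a t1 t2 _ [h1 n1] _ [h2 n2]]; [split; simpl; tauto |].
  rewrite se_Tnode by auto. split; simpl; tauto.
Qed.
Lemma se_Fform f : Fform f -> Ftree (se f).
Proof.
  induction 1 as [|a f1 f2 _ [h1 n1] _ [h2 n2]]; [split; simpl; tauto |].
  rewrite se_Fnode by auto. split; simpl; tauto.
Qed.

Lemma Tform_inj t t' : Tform t -> Tform t' -> se t = se t' -> t = t'.
Proof.
  intros H. revert t'. induction H as [|a t1 t2 H1 IH1 H2 IH2]; intros t' H' e;
    destruct H' as [|a' t1' t2' H1' H2']; auto;
    rewrite ?se_Tnode in e by (apply se_Tform; auto); try discriminate.
  injection e as e1 -> e2. f_equal; [f_equal|]; auto.
Qed.
Lemma Fform_inj f f' : Fform f -> Fform f' -> se f = se f' -> f = f'.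
Proof.
  intros H. revert f'. induction H as [|a f1 f2 H1 IH1 H2 IH2]; intros f' H' e;
    destruct H' as [|a' f1' f2' H1' H2']; auto;
    rewrite ?se_Fnode in e by (apply se_Fform; auto); try discriminate.
  injection e as e1 -> e2. f_equal; [f_equal|]; auto.
Qed.

Lemma se_Lform m : Lform m -> M_tree (se m) /\ T_prime (se m) /\ F_prime (se m).
Proof.
  intros [a t f Ht Hf|a t f Ht Hf]; destruct (se_Tform t Ht) as [tT tF];
    destruct (se_Fform f Hf) as [fF fT];
    [rewrite se_Tnode | rewrite se_negatom_node]; auto;
    apply node_M_tree; unfold mixed; simpl; tauto.
Qed.

Lemma Lform_inj m m' : Lform m -> Lform m' -> se m = se m' -> m = m'.
Proof.
  intros [a t f Ht Hf|a t f Ht Hf] [a' t' f' Ht' Hf'|a' t' f' Ht' Hf'];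
    destruct (se_Tform t Ht), (se_Fform f Hf), (se_Tform t' Ht'), (se_Fform f' Hf');
    rewrite ?se_Tnode, ?se_negatom_node by auto; intros e; injection e as e1 -> e2.
  - f_equal; [f_equal|]; auto using Tform_inj, Fform_inj.
  - exfalso. rewrite e1 in *. tauto.
  - exfalso. rewrite e1 in *. tauto.
  - f_equal; [f_equal|]; auto using Tform_inj, Fform_inj.
Qed.

Lemma se_Mform k m : Mform k m ->
  M_tree (se m) /\ (k <> Conj -> T_prime (se m)) /\ (k <> Disj -> F_prime (se m)).
Proof.
  induction 1 as [m Hm|k k' c m _ [hc [pTc _]] Hk _ [hm _]|k k' d m _ [hd [_ pFd]] Hk _ [hm _]].
  - destruct (se_Lform m Hm) as [h [pT pF]]. auto.
  - destruct (conj_tree (se c) (se m)) as [h pF]; auto.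
    split; [exact h | split; intros ?; [congruence | exact pF]].
  - destruct (disj_tree (se d) (se m)) as [h pT]; auto.
    split; [exact h | split; intros ?; [exact pT | congruence]].
Qed.

Lemma Mform_Conj_iff k m : Mform k m -> (k = Conj <-> ~ T_prime (se m)).
Proof.
  intros H. split.
  - intros ->. inversion H as [|k1 k2 c m0 Hc _ Hm0|]; subst. simpl.
    destruct (se_Mform _ _ Hc) as [[mc _] _], (se_Mform _ _ Hm0) as [[mm _] _].
    intros pT. exact (T_prime_not_conj _ _ _ pT mc mm eq_refl).
  - intros nT. destruct (se_Mform k m H) as [_ [pT _]].
    destruct k; auto; exfalso; apply nT, pT; discriminate.
Qed.
Lemma Mform_Disj_iff k m : Mform k m -> (k = Disj <-> ~ F_prime (se m)).
Proof.
  intros H. split.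
  - intros ->. inversion H as [| |k1 k2 d m0 Hd _ Hm0]; subst. simpl.
    destruct (se_Mform _ _ Hd) as [[md _] _], (se_Mform _ _ Hm0) as [[mm _] _].
    intros pF. exact (F_prime_not_disj _ _ _ pF md mm eq_refl).
  - intros nF. destruct (se_Mform k m H) as [_ [_ pF]].
    destruct k; auto; exfalso; apply nF, pF; discriminate.
Qed.

Lemma Mform_kind_inj k k' m m' : Mform k m -> Mform k' m' -> se m = se m' -> k = k'.
Proof.
  intros H H' e.
  destruct (Mform_Conj_iff k m H), (Mform_Conj_iff k' m' H'),
    (Mform_Disj_iff k m H), (Mform_Disj_iff k' m' H').
  rewrite e in *. destruct k, k'; intuition discriminate.
Qed.

Lemma Mform_inj k m k' m' : Mform k m -> Mform k' m' -> se m = se m' -> m = m'.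
Proof.
  intros H. revert k' m'.
  induction H as [m Hm|k1 k2 c m Hc IHc Hk Hm IHm|k1 k2 d m Hd IHd Hk Hm IHm];
    intros k' m' H' e.
  - rewrite <- (Mform_kind_inj _ _ _ _ (Mform_lit _ Hm) H' e) in H'.
    inversion H'; subst. apply Lform_inj; auto.
  - rewrite <- (Mform_kind_inj _ _ _ _ (Mform_conj _ _ _ _ Hc Hk Hm) H' e) in H'.
    inversion H' as [|k1' k2' c' m0 Hc' Hk' Hm0|]; subst.
    destruct (se_Mform _ _ Hc) as [[mc _] [pc _]], (se_Mform _ _ Hc') as [[mc' _] [pc' _]].
    destruct (conj_tree_inj (se c) (se c') (se m) (se m0)) as [e1 e2]; auto;
      try apply (se_Mform _ _ Hm); try apply (se_Mform _ _ Hm0).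
    f_equal; eauto.
  - rewrite <- (Mform_kind_inj _ _ _ _ (Mform_disj _ _ _ _ Hd Hk Hm) H' e) in H'.
    inversion H' as [| |k1' k2' d' m0 Hd' Hk' Hm0]; subst.
    destruct (se_Mform _ _ Hd) as [[md _] [_ pd]], (se_Mform _ _ Hd') as [[md' _] [_ pd']].
    destruct (disj_tree_inj (se d) (se d') (se m) (se m0)) as [e1 e2]; auto;
      try apply (se_Mform _ _ Hm); try apply (se_Mform _ _ Hm0).
    f_equal; eauto.
Qed.

Lemma se_and_Tform_Mform t k m : Tform t -> Mform k m -> mixed (se (t ⊓ m)).
Proof. intros Ht Hm. apply mixed_replT; [apply (se_Tform t Ht) | apply (se_Mform k m Hm)]. Qed.

Lemma Nform_inj (n n' : sterm A) : Nform n -> Nform n' -> se n = se n' -> n = n'.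
Proof.
  intros [t Ht|f Hf|t k m Ht Hm] [t' Ht'|f' Hf'|t' k' m' Ht' Hm'] e.
  - apply Tform_inj; auto.
  - exfalso. destruct (se_Tform _ Ht), (se_Fform _ Hf'). rewrite e in *. tauto.
  - exfalso. destruct (se_Tform _ Ht), (se_and_Tform_Mform _ _ _ Ht' Hm'). rewrite e in *. tauto.
  - exfalso. destruct (se_Fform _ Hf), (se_Tform _ Ht'). rewrite e in *. tauto.
  - apply Fform_inj; auto.
  - exfalso. destruct (se_Fform _ Hf), (se_and_Tform_Mform _ _ _ Ht' Hm'). rewrite e in *. tauto.
  - exfalso. destruct (se_and_Tform_Mform _ _ _ Ht Hm), (se_Tform _ Ht'). rewrite e in *. tauto.
  - exfalso. destruct (se_and_Tform_Mform _ _ _ Ht Hm), (se_Fform _ Hf'). rewrite e in *. tauto.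
  - destruct (Ttree_conj_inj (se t) (se t') (se m) (se m')) as [e1 e2];
      auto using se_Tform; try apply (se_Mform _ _ Hm); try apply (se_Mform _ _ Hm').
    f_equal; [apply Tform_inj | apply (Mform_inj k m k' m')]; auto.
Qed.

End Injectivity.

Theorem theorem2p4 (A : Type) (HA : inhabited A) (P Q : sterm A) :
  derivable (@EqFSCL A) (emb P) (emb Q) <-> se P = se Q.
Proof.
  split; [apply se_sound |]. intros e.
  destruct (Nform_exists P) as [n [Hn EP]], (Nform_exists Q) as [n' [Hn' EQ]].
  assert (n = n') as <-.
  { apply Nform_inj; auto. rewrite <- (se_sound _ _ EP), <- (se_sound _ _ EQ). exact e. }
  change (P ≈ Q). rewrite EP, EQ. reflexivity.
Qed.
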